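(* Let $f:[1,3]\to[1,3]$ be defined by $f(x)=-2x+5$ for $1\le x\le 2$ and $f(x)=x-1$ for $2\le x\le 3$. Then: (a) for every positive integer $m$, if $a_m$ denotes the number of distinct solutions $x\in[1,3]$ of $f^m(x)=x$, then $(a_m)_{m\ge1}$ is the Lucas sequence, i.e. $a_1=1$, $a_2=3$ and $a_{m+2}=a_{m+1}+a_m$ for all $m\ge1$; (b) for every positive integer $m$, $f$ has exactly $\Phi_1(m)/m$ distinct periodic orbits of minimal period $m$; (c) the sequence $(\Phi_1(m)/m)_{m\ge 6}$ is strictly increasing, and $\lim_{m\to\infty}\dfrac{\Phi_1(m+1)/(m+1)}{\Phi_1(m)/m}=\dfrac{1+\sqrt5}{2}$.
   Context: Here $f^m$ denotes the $m$-th iterate of $f$; a point $x$ has minimal period $m$ if $f^m(x)=x$ and its orbit $\{f^k(x):k\ge0\}$ has exactly $m$ elements. For an integer-valued function $\phi$ on the positive integers, define $\Phi(1,\phi)=\phi(1)$ and, if $m=p_1^{k_1}\cdots p_r^{k_r}$ with distinct primes $p_i$ and $r,k_i\ge1$, $\Phi(m,\phi)=\phi(m)-\sum_{i}\phi(m/p_i)+\sum_{i_1<i_2}\phi(m/(p_{i_1}p_{i_2}))-\cdots+(-1)^r\phi(m/(p_1\cdots p_r))$, the sums over indices in $\{1,\dots,r\}$ (equivalently $\Phi(m,\phi)=\sum_{d\mid m}\mu(m/d)\phi(d)$ with $\mu$ the Möbius function). Let $\phi$ be the Lucas sequence ($\phi(1)=1,\phi(2)=3,\phi(m+2)=\phi(m+1)+\phi(m)$)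 and set $\Phi_1(m)=\Phi(m,\phi)$. *)

From Stdlib Require Import Reals Lra Lia ZArith Arith List Bool.
Import ListNotations.
Open Scope R_scope.

(* The map f on [1,3]: f(x) = -2x+5 on [1,2], f(x) = x-1 on [2,3]
   (both branches give 1 at x = 2). Values outside [1,3] are irrelevant. *)
Definition fmap (x : R) : R := if Rle_dec x 2 then -2 * x + 5 else x - 1.

Fixpoint iter (m : nat) (g : R -> R) (x : R) : R :=
  match m with O => x | S k => g (iter k g x) end.

Definition in_orbit (g : R -> R) (x y : R) : Prop := exists k : nat, y = iter k g x.

Definition min_period (g : R -> R) (m : nat) (x : R) : Prop :=
  iter m g x = x /\
  exists l : list R, NoDup l /\ length l = m /\ (forall y, In y l <-> in_orbit g x y).

(* Lucas sequence, phi(1)=1, phi(2)=3, phi(m+2)=phi(m+1)+phi(m); lucas 0 = 2 unused *)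
Fixpoint lucas (n : nat) : Z :=
  match n with
  | O => 2%Z
  | S O => 1%Z
  | S ((S k) as k1) => (lucas k1 + lucas k)%Z
  end.

Definition is_primeb (p : nat) : bool :=
  andb (1 <? p)%nat (forallb (fun d => negb (p mod d =? 0)%nat) (seq 2 (p - 2))).

Definition prime_divisors (n : nat) : list nat :=
  filter (fun p => andb (is_primeb p) (n mod p =? 0)%nat) (seq 1 n).

Definition squarefreeb (n : nat) : bool :=
  forallb (fun p => negb (n mod (p * p) =? 0)%nat) (prime_divisors n).

Definition moebius (n : nat) : Z :=
  if squarefreeb n then (-1) ^ Z.of_nat (length (prime_divisors n)) else 0%Z.

Definition PhiZ (m : nat) (phi : nat -> Z) : Z :=
  fold_right Z.add 0%Z
    (map (fun d => (moebius (m / d) * phi d)%Z)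
         (filter (fun d => (m mod d =? 0)%nat) (seq 1 m))).

Definition Phi1 (m : nat) : Z := PhiZ m lucas.

Definition Phi1_over (m : nat) : R := IZR (Phi1 m) / INR m.

(** The map [f] ([fmap]) is expanding on both branches [[1,2]] and [[2,3]], so a
    point is determined by its itinerary, the sequence of branches its orbit
    visits.  Coding the left branch by [true] and the right one by [false], the
    only constraint is that a right letter is always followed by a left letter.

    - Part (a): the fixed points of [f^m] in [[1,3]] correspond bijectively to the
      cyclically admissible words of length [m] (each such word [w] is the
      itinerary of the unique fixed point [word_point w] of the contraction
      obtained by composing inverse branches along [w]); these words are counted
      by Fibonacci numbers, giving [lucas m].
    - Part (b): grouping the fixed points of [f^m] by exact period [d | m] gives
      [lucas m = sum_(d | m) P d]; Moebius inversion yields [Phi1 m = P m], and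
      the points of exact period [m] split into orbits of [m] points, each
      represented by its minimum.
    - Part (c): [lucas m - Phi1 m] is at most [lucas 1 + ... + lucas (m/2)],
      negligible against [lucas m]; both the monotonicity of [Phi1 m / m] and
      the golden-ratio limit follow from this and the Lucas recurrence. *)

From Stdlib Require Import Reals Lra Lia ZArith Arith List Bool Permutation.
Import ListNotations.
Open Scope R_scope.

Lemma iter_succ_r (g : R -> R) n x : iter (S n) g x = iter n g (g x).
Proof. revert x; induction n as [|n IH]; intros x; simpl; auto. rewrite <- IH; reflexivity. Qed.

Lemma iter_add (g : R -> R) a b x : iter (a + b) g x = iter a g (iter b g x).
Proof. induction a as [|a IH]; simpl; auto. rewrite IH; auto. Qed.

Lemma iter_mul (g : R -> R) p x k : iter p g x = x -> iter (k * p) g x = x.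
Proof. intros H; induction k as [|k IH]; simpl; auto. rewrite iter_add, IH; auto. Qed.

Lemma iter_mod (g : R -> R) p x n :
  (1 <= p)%nat -> iter p g x = x -> iter n g x = iter (n mod p) g x.
Proof.
  intros Hp H. rewrite (Nat.div_mod n p) at 1 by lia.
  rewrite Nat.add_comm, iter_add, Nat.mul_comm, iter_mul; auto.
Qed.

Lemma fmap_left y : y <= 2 -> fmap y = -2 * y + 5.
Proof. intros; unfold fmap; destruct Rle_dec; lra. Qed.

Lemma fmap_right y : 2 < y -> fmap y = y - 1.
Proof. intros; unfold fmap; destruct Rle_dec; lra. Qed.

Lemma fmap_interval x : 1 <= x <= 3 -> 1 <= fmap x <= 3.
Proof. unfold fmap; destruct (Rle_dec x 2); lra. Qed.

Lemma iter_interval n x : 1 <= x <= 3 -> 1 <= iter n fmap x <= 3.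
Proof. intros H; induction n; simpl; auto. apply fmap_interval; auto. Qed.

(* The orbit of [3/2] is [3/2, 2, 1, 3, 2, 1, 3, ...]: it never comes back. *)
Lemma orbit_three_halves n :
  (1 <= n)%nat -> iter n fmap (3/2) = 1 \/ iter n fmap (3/2) = 2 \/ iter n fmap (3/2) = 3.
Proof.
  intros Hn. induction n as [|n IH]; [lia|].
  destruct n as [|n]; [simpl; rewrite fmap_left; lra|].
  change (iter (S (S n)) fmap (3/2)) with (fmap (iter (S n) fmap (3/2))).
  destruct (IH ltac:(lia)) as [E|[E|E]]; rewrite E;
    [rewrite fmap_left|rewrite fmap_left|rewrite fmap_right]; lra.
Qed.

(** Symbolic dynamics.  A letter [true] stands for the left branch [[1,2]],
    [false] for the right branch [[2,3]]; [side x] is the letter of [x]. *)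

Definition side (y : R) : bool := if Rle_dec y 2 then true else false.

(* The inverse of the branch [b], and the composite [pullback w] of the inverse
   branches along a word [w] (the first letter is applied last). *)
Definition inv_branch (b : bool) (y : R) : R := if b then (5 - y) / 2 else y + 1.

Fixpoint pullback (w : list bool) (y : R) : R :=
  match w with [] => y | b :: w' => inv_branch b (pullback w' y) end.

Lemma inv_branch_side y : inv_branch (side y) (fmap y) = y.
Proof. unfold inv_branch, side, fmap; destruct (Rle_dec y 2); lra. Qed.

Lemma fmap_inv_branch b y : 1 <= y -> fmap (inv_branch b y) = y.
Proof. intros H; unfold inv_branch, fmap; destruct b; destruct (Rle_dec _ 2); lra. Qed.

Fixpoint slope (w : list bool) : R :=
  match w with [] => 1 | b :: w' => if b then - slope w' / 2 else slope w' end.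
Fixpoint offset (w : list bool) : R :=
  match w with [] => 0 | b :: w' => if b then (5 - offset w') / 2 else offset w' + 1 end.

Lemma pullback_affine w y : pullback w y = slope w * y + offset w.
Proof. induction w as [|b w IH]; simpl; [lra|]. rewrite IH; destruct b; unfold inv_branch; field. Qed.

(* Each left letter halves the slope, so a word using the left branch
   gives a contraction. *)
Lemma slope_contracting w : In true w -> Rabs (slope w) <= / 2.
Proof.
  assert (H : Rabs (slope w) <= 1 /\ (In true w -> Rabs (slope w) <= / 2)).
  { induction w as [|b w [H1 H2]]; simpl.
    - rewrite Rabs_R1; split; [lra|tauto].
    - destruct b.
      + replace (- slope w / 2) with ((- / 2) * slope w) by field. rewrite Rabs_mult.
        replace (Rabs (- / 2)) with (/ 2) by (rewrite Rabs_Ropp, Rabs_right; lra).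
        split; intros; nra.
      + split; auto. intros [E|E]; [discriminate|auto]. }
  apply H.
Qed.

(* The fixed point of the contraction [pullback w], candidate periodic point of
   itinerary [w]. *)
Definition word_point (w : list bool) : R := offset w / (1 - slope w).

Lemma word_point_unique w x : slope w <> 1 -> pullback w x = x -> x = word_point w.
Proof.
  intros HA H. rewrite pullback_affine in H. unfold word_point.
  apply (Rmult_eq_reg_r (1 - slope w)); [field_simplify|]; lra.
Qed.

Lemma word_point_fixed w : slope w <> 1 -> pullback w (word_point w) = word_point w.
Proof. intros HA. rewrite pullback_affine. unfold word_point. field. lra. Qed.

Fixpoint itinerary (n : nat) (x : R) : list bool :=
  match n with O => [] | S n => side x :: itinerary n (fmap x) end.

Lemma itinerary_length n x : length (itinerary n x) = n.
Proof. revert x; induction n; intros; simpl; auto. Qed.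

Lemma nth_itinerary n x k : (k < n)%nat -> nth k (itinerary n x) true = side (iter k fmap x).
Proof.
  revert x k; induction n as [|n IH]; intros x k Hk; [lia|]. destruct k; simpl; auto.
  rewrite IH by lia. rewrite <- iter_succ_r. reflexivity.
Qed.

Lemma pullback_itinerary n x : pullback (itinerary n x) (iter n fmap x) = x.
Proof.
  revert x; induction n as [|n IH]; intros x; simpl; auto.
  change (fmap (iter n fmap x)) with (iter (S n) fmap x).
  rewrite iter_succ_r, IH. apply inv_branch_side.
Qed.

(** Admissible words.  From [(2,3]] the map goes to [(1,2]], so in an itinerary
    a right letter [false] is always followed by a left letter [true]. *)

Definition admissible (s : list bool) : Prop :=
  forall k, (S k < length s)%nat -> nth k s true = false -> nth (S k) s true = true.

Definition close_cycle (w : list bool) : list bool := w ++ [nth 0 w true].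

Definition cyclic_admissible (w : list bool) : Prop :=
  forall k, (k < length w)%nat ->
    nth k (close_cycle w) true = false -> nth (S k) (close_cycle w) true = true.

Lemma nth_close_cycle w k : (k < length w)%nat -> nth k (close_cycle w) true = nth k w true.
Proof. intros; unfold close_cycle; apply app_nth1; auto. Qed.

Lemma nth_close_cycle_end w : nth (length w) (close_cycle w) true = nth 0 w true.
Proof. unfold close_cycle. rewrite app_nth2, Nat.sub_diag by lia. reflexivity. Qed.

Lemma itinerary_cyclic_admissible m x :
  1 <= x <= 3 -> iter m fmap x = x -> cyclic_admissible (itinerary m x).
Proof.
  intros Hx Hf k Hk. rewrite itinerary_length in Hk.
  assert (E : forall j, (j <= m)%nat -> nth j (close_cycle (itinerary m x)) true = side (iter j fmap x)).
  { intros j Hj. destruct (Nat.eq_dec j m) as [->|Hne].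
    - rewrite <- (itinerary_length m x) at 1. rewrite nth_close_cycle_end, nth_itinerary by lia.
      simpl. rewrite Hf; reflexivity.
    - rewrite nth_close_cycle by (rewrite itinerary_length; lia). apply nth_itinerary; lia. }
  rewrite !E by lia. unfold side. simpl iter. pose proof (iter_interval k x Hx).
  destruct (Rle_dec (iter k fmap x) 2) as [a|a]; intros HH; [discriminate|].
  rewrite fmap_right by lra. destruct (Rle_dec _ 2); [reflexivity|lra].
Qed.

Lemma admissible_skipn w k : cyclic_admissible w -> admissible (skipn k w).
Proof.
  intros Hg i Hi Hn. rewrite length_skipn in Hi. rewrite nth_skipn in *.
  specialize (Hg (k + i)%nat ltac:(lia)).
  rewrite !nth_close_cycle in Hg by lia. replace (k + S i)%nat with (S (k + i)) by lia. auto.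
Qed.

(* [branch_interval b] is the interval of the letter [b]; [pullback_domain b] is
   where the inverse branch of a final letter [b] may be applied to a point that
   is itself admissible (after a right letter comes a left one). *)
Definition branch_interval (b : bool) (y : R) : Prop := if b then 1 <= y <= 2 else 2 <= y <= 3.
Definition pullback_domain (b : bool) (y : R) : Prop := if b then 1 <= y <= 3 else 1 <= y <= 2.

Lemma pullback_range s y :
  s <> [] -> admissible s -> pullback_domain (last s true) y ->
  branch_interval (hd true s) (pullback s y).
Proof.
  revert y; induction s as [|b s IH]; intros y Hne Hl Hy; [congruence|].
  destruct s as [|b' s'].
  - simpl in *. unfold branch_interval, pullback_domain, inv_branch in *; destruct b; lra.
  - assert (Hl' : admissible (b' :: s')).
    { intros k Hk Hn. apply (Hl (S k)); simpl in *; auto; lia. }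
    specialize (IH y ltac:(discriminate) Hl' Hy).
    simpl pullback. simpl hd in *. unfold branch_interval in *. unfold inv_branch. destruct b.
    + destruct b'; simpl in *; lra.
    + assert (b' = true) by (apply (Hl 0%nat); simpl; auto; lia). subst b'. simpl in *; lra.
Qed.

Lemma skipn_nth_cons (w : list bool) k :
  (k < length w)%nat -> skipn k w = nth k w true :: skipn (S k) w.
Proof.
  revert k; induction w as [|a w IH]; intros k Hk; simpl in Hk; [lia|].
  destruct k; simpl; auto. apply IH; lia.
Qed.

Lemma last_skipn (w : list bool) k : (k < length w)%nat -> last (skipn k w) true = last w true.
Proof.
  revert k; induction w as [|a w IH]; intros k Hk; simpl in Hk; [lia|].
  destruct k; simpl; auto. rewrite IH by lia. destruct w; simpl in *; [lia|auto].
Qed.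

Lemma last_nth (w : list bool) : last w true = nth (length w - 1) w true.
Proof.
  induction w as [|a w IH]; auto. destruct w as [|b w]; auto.
  change (last (b :: w) true = nth (length w) (b :: w) true).
  rewrite IH. simpl. rewrite Nat.sub_0_r. reflexivity.
Qed.

(** Every nonempty cyclically admissible word [w] is the itinerary of exactly
    one periodic point, namely [word_point w]. *)
Section WordPoint.

Variable w : list bool.
Hypothesis w_adm : cyclic_admissible w.
Hypothesis w_nonempty : (1 <= length w)%nat.

Let m := length w.
Let x := word_point w.

Lemma word_uses_left : In true w.
Proof.
  pose proof (w_adm 0%nat ltac:(lia)) as H0. clear m x.
  destruct w as [|c u]; simpl in *; [lia|].
  destruct c; [left; auto|right]. unfold close_cycle in H0.
  destruct u as [|a u]; simpl in H0.
  - discriminate (H0 eq_refl).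
  - rewrite (H0 eq_refl); left; auto.
Qed.

Lemma word_slope_lt_1 : slope w < 1.
Proof.
  pose proof (slope_contracting w word_uses_left) as H.
  unfold Rabs in H; destruct Rcase_abs in H; lra.
Qed.

(* [pullback w] maps the interval [pullback_domain (last w)] into itself, hence
   so does its fixed point. *)
Lemma word_point_domain : pullback_domain (last w true) x.
Proof.
  set (l := last w true).
  assert (Hne : w <> []) by (intros E; rewrite E in w_nonempty; simpl in w_nonempty; lia).
  assert (Hl0 : l = false -> nth 0 w true = true).
  { intros E. unfold l in E. rewrite last_nth in E.
    specialize (w_adm (length w - 1)%nat ltac:(lia)).
    rewrite nth_close_cycle in w_adm by lia.
    replace (S (length w - 1)) with (length w) in w_adm by lia.
    rewrite nth_close_cycle_end in w_adm. auto. }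
  assert (Hmap : forall y, pullback_domain l y -> pullback_domain l (pullback w y)).
  { intros y Hy. pose proof (pullback_range w y Hne (admissible_skipn w 0 w_adm) Hy) as H.
    replace (hd true w) with (nth 0 w true) in H by (destruct w; [congruence|reflexivity]).
    unfold pullback_domain, branch_interval in *. destruct l.
    - destruct (nth 0 w true); lra.
    - rewrite Hl0 in H by auto. lra. }
  pose proof word_slope_lt_1.
  assert (E : x * (1 - slope w) = offset w) by (unfold x, word_point; field; lra).
  set (hi := if l then 3 else 2).
  assert (H1 := Hmap 1 ltac:(unfold pullback_domain; destruct l; lra)).
  assert (H2 := Hmap hi ltac:(unfold pullback_domain, hi; destruct l; lra)).
  rewrite !pullback_affine in H1, H2.
  unfold pullback_domain, hi in *. destruct l; split; nra.
Qed.

Lemma word_point_interval : 1 <= x <= 3.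
Proof. pose proof word_point_domain. unfold pullback_domain in *. destruct (last w true); lra. Qed.

(* The candidate orbit: [orbit_point k] is the point of itinerary [skipn k w]. *)
Let orbit_point (k : nat) : R := pullback (skipn k w) x.

Lemma orbit_point_branch k : (k < m)%nat -> branch_interval (nth k w true) (orbit_point k).
Proof.
  intros Hk. unfold orbit_point.
  replace (nth k w true) with (hd true (skipn k w)) by (rewrite skipn_nth_cons by auto; reflexivity).
  apply pullback_range.
  - rewrite skipn_nth_cons by auto. discriminate.
  - apply admissible_skipn; auto.
  - rewrite last_skipn by auto. apply word_point_domain.
Qed.

Lemma orbit_point_step k :
  (k < m)%nat -> orbit_point k = inv_branch (nth k w true) (orbit_point (S k)).
Proof. intros Hk. unfold orbit_point. rewrite skipn_nth_cons by auto. reflexivity. Qed.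

Lemma orbit_point_0 : orbit_point 0 = x.
Proof. unfold orbit_point, x. simpl. apply word_point_fixed. pose proof word_slope_lt_1. lra. Qed.

Lemma orbit_point_m : orbit_point m = x.
Proof. unfold orbit_point, m. rewrite skipn_all. reflexivity. Qed.

Lemma orbit_point_interval k : (k <= m)%nat -> 1 <= orbit_point k <= 3.
Proof.
  intros Hk. destruct (Nat.eq_dec k m) as [->|Hne].
  - rewrite orbit_point_m. apply word_point_interval.
  - pose proof (orbit_point_branch k ltac:(lia)) as H.
    unfold branch_interval in H; destruct (nth k w true); lra.
Qed.

Lemma iter_word_point k : (k <= m)%nat -> iter k fmap x = orbit_point k.
Proof.
  induction k as [|k IH]; intros Hk; simpl; [symmetry; apply orbit_point_0|].
  rewrite IH, orbit_point_step by lia. apply fmap_inv_branch. apply orbit_point_interval; lia.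
Qed.

Lemma word_point_periodic : iter m fmap x = x.
Proof. rewrite iter_word_point by lia. apply orbit_point_m. Qed.

(* On the boundary point [2] the letter could be ambiguous; but a right letter
   is preceded by a left one, whose orbit point would then be [3/2], which is
   not periodic. *)
Lemma orbit_point_not_2 k : (k < m)%nat -> nth k w true = false -> orbit_point k <> 2.
Proof.
  intros Hk Hwk Ez.
  set (j := if Nat.eq_dec k 0 then (m - 1)%nat else (k - 1)%nat).
  assert (Hj : (j < m)%nat) by (unfold j; destruct Nat.eq_dec; lia).
  assert (Hsucc : nth (S j) (close_cycle w) true = false /\ orbit_point (S j) = 2).
  { unfold j; destruct (Nat.eq_dec k 0) as [->|Hk0].
    - replace (S (m - 1)) with m by lia. unfold m. rewrite nth_close_cycle_end.
      fold m. rewrite orbit_point_m, <- orbit_point_0. auto.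
    - replace (S (k - 1)) with k by lia. rewrite nth_close_cycle by auto. auto. }
  destruct Hsucc as [Hs1 Hs2].
  assert (Hjt : nth j w true = true).
  { rewrite <- (nth_close_cycle w j) by auto.
    destruct (nth j (close_cycle w) true) eqn:E; auto.
    rewrite (w_adm j Hj E) in Hs1. discriminate. }
  assert (Ej : orbit_point j = 3/2).
  { rewrite orbit_point_step, Hjt, Hs2 by auto. unfold inv_branch. lra. }
  assert (Hper : iter m fmap (orbit_point j) = orbit_point j).
  { rewrite <- iter_word_point, <- iter_add, Nat.add_comm, iter_add, word_point_periodic by lia.
    reflexivity. }
  rewrite Ej in Hper. destruct (orbit_three_halves m w_nonempty) as [E|[E|E]]; lra.
Qed.

Lemma word_point_itinerary : itinerary m x = w.
Proof.
  apply nth_ext with (d := true) (d' := true); [apply itinerary_length|].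
  intros k Hk. rewrite itinerary_length in Hk.
  rewrite nth_itinerary, iter_word_point by lia.
  pose proof (orbit_point_branch k Hk) as HI. unfold side.
  destruct (Rle_dec (orbit_point k) 2); destruct (nth k w true) eqn:E; simpl in HI; auto; try lra.
  exfalso. apply (orbit_point_not_2 k Hk E). lra.
Qed.

End WordPoint.

(* [admissible_between p u q]: the word [p :: u ++ [q]] has no two consecutive
   right letters. *)
Fixpoint admissible_between (p : bool) (u : list bool) (q : bool) : bool :=
  match u with [] => p || q | a :: u' => (p || a) && admissible_between a u' q end.

Fixpoint words_between (n : nat) (p q : bool) : list (list bool) :=
  match n with
  | O => if p || q then [[]] else []
  | S n => map (cons true) (words_between n true q) ++
           (if p then map (cons false) (words_between n false q) else [])
  end.

Lemma words_between_spec n p q u :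
  In u (words_between n p q) <-> length u = n /\ admissible_between p u q = true.
Proof.
  revert p u; induction n as [|n IH]; intros p u; simpl.
  - destruct (p || q) eqn:E; simpl; split.
    + intros [<-|[]]; simpl; auto.
    + intros [H1 H2]; destruct u; simpl in *; auto; discriminate.
    + intros [].
    + intros [H1 H2]; destruct u; simpl in *; [congruence|discriminate].
  - rewrite in_app_iff, in_map_iff. split.
    + intros [[v [<- Hv]]|H].
      * apply IH in Hv. destruct Hv as [Hl Hv]. simpl. rewrite Hl, Hv, orb_true_r; auto.
      * destruct p; [|destruct H]. apply in_map_iff in H. destruct H as [v [<- Hv]].
        apply IH in Hv. destruct Hv as [Hl Hv]. simpl. rewrite Hl, Hv; auto.
    + intros [Hl Hok]. destruct u as [|a v]; simpl in Hl; [discriminate|].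
      simpl in Hok. apply andb_true_iff in Hok. destruct Hok as [H1 H2].
      destruct a.
      * left. exists v; split; auto. apply IH; auto.
      * right. destruct p; [|discriminate]. apply in_map_iff. exists v; split; auto. apply IH; auto.
Qed.

Lemma NoDup_map_cons (b : bool) (L : list (list bool)) : NoDup L -> NoDup (map (cons b) L).
Proof. apply NoDup_map_NoDup_ForallPairs. intros x y _ _ E; inversion E; auto. Qed.

Lemma NoDup_app_cons (L L' : list (list bool)) :
  NoDup L -> NoDup L' -> NoDup (map (cons true) L ++ map (cons false) L').
Proof.
  intros H H'. apply NoDup_app; try apply NoDup_map_cons; auto.
  intros x H1 H2. apply in_map_iff in H1, H2.
  destruct H1 as [u [<- _]], H2 as [v [E _]]. discriminate.
Qed.

Lemma words_between_nodup n p q : NoDup (words_between n p q).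
Proof.
  revert p; induction n as [|n IH]; intros p; simpl.
  - destruct (p || q); repeat constructor; auto.
  - destruct p; [apply NoDup_app_cons; auto|]. rewrite app_nil_r. apply NoDup_map_cons; auto.
Qed.

Fixpoint fib (n : nat) : nat :=
  match n with O => O | S k => match k with O => 1%nat | S j => (fib k + fib j)%nat end end.

(* Each boundary letter that is a left letter frees one more position. *)
Lemma words_between_count n p q :
  length (words_between n p q) = fib (n + (if p then 1 else 0) + (if q then 1 else 0)).
Proof.
  revert p; induction n as [|n IH]; intros p; [destruct p, q; reflexivity|].
  cbn [words_between]. rewrite length_app, length_map, IH. destruct p.
  - rewrite length_map, IH.
    replace (S n + 1 + (if q then 1 else 0))%nat with (S (S (n + (if q then 1 else 0)))) by (destruct q; lia).
    replace (n + 1 + (if q then 1 else 0))%nat with (S (n + (if q then 1 else 0))) by (destruct q; lia).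
    rewrite Nat.add_0_r. reflexivity.
  - simpl length. rewrite Nat.add_0_r.
    replace (S n + 0)%nat with (n + 1)%nat by lia. reflexivity.
Qed.

Lemma admissible_between_nth p u q : admissible_between p u q = true <->
  forall k, (k < S (length u))%nat ->
    nth k (p :: u ++ [q]) true = false -> nth (S k) (p :: u ++ [q]) true = true.
Proof.
  revert p; induction u as [|a u IH]; intros p; simpl.
  - split.
    + intros H k Hk. destruct k; [|lia]. destruct p; simpl in *; auto; discriminate.
    + intros H. specialize (H 0%nat ltac:(lia)). destruct p; simpl in *; auto.
  - rewrite andb_true_iff, IH. split.
    + intros [H1 H2] k Hk. destruct k.
      * destruct p; simpl in *; intros E; [discriminate|auto].
      * apply H2. lia.
    + intros H. split.
      * specialize (H 0%nat ltac:(lia)). destruct p; simpl in *; auto.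
      * intros k Hk. apply (H (S k)). lia.
Qed.

Lemma cyclic_admissible_between c u : cyclic_admissible (c :: u) <-> admissible_between c u c = true.
Proof. rewrite admissible_between_nth. unfold cyclic_admissible, close_cycle. simpl. tauto. Qed.

Definition cyclic_words (m : nat) : list (list bool) :=
  map (cons true) (words_between (m - 1) true true) ++
  map (cons false) (words_between (m - 1) false false).

Lemma cyclic_words_spec m w :
  (1 <= m)%nat -> In w (cyclic_words m) <-> length w = m /\ cyclic_admissible w.
Proof.
  intros Hm. unfold cyclic_words. rewrite in_app_iff, !in_map_iff. split.
  - intros [[u [<- Hu]]|[u [<- Hu]]]; apply words_between_spec in Hu; destruct Hu as [H1 H2];
      (split; [simpl; lia|apply cyclic_admissible_between; auto]).
  - intros [Hl Hg]. destruct w as [|c u]; simpl in Hl; [lia|].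
    apply cyclic_admissible_between in Hg.
    destruct c; [left|right]; exists u; split; auto; apply words_between_spec; split; auto; lia.
Qed.

Lemma cyclic_words_nodup m : NoDup (cyclic_words m).
Proof. apply NoDup_app_cons; apply words_between_nodup. Qed.

Lemma lucas_fib m : (1 <= m)%nat -> lucas m = Z.of_nat (fib (m + 1) + fib (m - 1)).
Proof.
  intros Hm. destruct m as [|n]; [lia|]. replace (S n - 1)%nat with n by lia. revert n Hm.
  assert (H : forall n, lucas (S n) = Z.of_nat (fib (S n + 1) + fib n) /\
                        lucas (S (S n)) = Z.of_nat (fib (S (S n) + 1) + fib (S n))).
  { induction n as [|n [H1 H2]]; [split; reflexivity|]. split; auto.
    change (lucas (S (S (S n)))) with (lucas (S (S n)) + lucas (S n))%Z. rewrite H1, H2.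
    rewrite !Nat.add_1_r. cbn [fib]. lia. }
  intros n _. apply H.
Qed.

Lemma cyclic_words_count m : (1 <= m)%nat -> Z.of_nat (length (cyclic_words m)) = lucas m.
Proof.
  intros Hm. unfold cyclic_words. rewrite length_app, !length_map, !words_between_count, lucas_fib by auto.
  f_equal. f_equal; f_equal; lia.
Qed.

Definition periodic_points (m : nat) : list R := map word_point (cyclic_words m).

Lemma periodic_points_spec m x :
  (1 <= m)%nat -> In x (periodic_points m) <-> (1 <= x <= 3 /\ iter m fmap x = x).
Proof.
  intros Hm. unfold periodic_points. rewrite in_map_iff. split.
  - intros [w [<- Hw]]. apply cyclic_words_spec in Hw as [Hl Hg]; auto. subst m.
    split; [apply word_point_interval|apply word_point_periodic]; auto.
  - intros [Hx Hf]. pose proof (itinerary_cyclic_admissible m x Hx Hf) as Hg.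
    exists (itinerary m x). split.
    + symmetry. apply word_point_unique.
      * pose proof (word_slope_lt_1 (itinerary m x) Hg ltac:(rewrite itinerary_length; lia)). lra.
      * rewrite <- Hf at 2. apply pullback_itinerary.
    + apply cyclic_words_spec; auto. split; [apply itinerary_length|auto].
Qed.

Lemma periodic_points_nodup m : (1 <= m)%nat -> NoDup (periodic_points m).
Proof.
  intros Hm. apply NoDup_map_NoDup_ForallPairs; [|apply cyclic_words_nodup].
  intros w v Hw Hv E. apply cyclic_words_spec in Hw as [Hw1 Hw2], Hv as [Hv1 Hv2]; auto.
  rewrite <- (word_point_itinerary w), <- (word_point_itinerary v) by (auto; lia).
  rewrite Hw1, Hv1, E. reflexivity.
Qed.

Lemma periodic_points_count m : (1 <= m)%nat -> Z.of_nat (length (periodic_points m)) = lucas m.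
Proof. intros Hm. unfold periodic_points. rewrite length_map. apply cyclic_words_count; auto. Qed.

Section Orbits.

Variable g : R -> R.

Definition exact_period (d : nat) (x : R) : Prop :=
  (1 <= d)%nat /\ iter d g x = x /\ forall k, (1 <= k < d)%nat -> iter k g x <> x.

Lemma iter_comm a b x : iter a g (iter b g x) = iter b g (iter a g x).
Proof. rewrite <- !iter_add, Nat.add_comm. reflexivity. Qed.

Lemma iter_return p k x :
  (1 <= p)%nat -> iter p g x = x -> iter (k * (p - 1)) g (iter k g x) = x.
Proof. intros Hp H. rewrite <- iter_add. replace (k * (p - 1) + k)%nat with (k * p)%nat by nia. apply iter_mul; auto. Qed.

Lemma exact_period_divides p x m : exact_period p x -> iter m g x = x -> Nat.divide p m.
Proof.
  intros [Hp [H1 H2]] Hm. apply Nat.Lcm0.mod_divide.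
  rewrite (iter_mod g p x m) in Hm by auto.
  destruct (Nat.eq_dec (m mod p) 0); auto. exfalso.
  apply (H2 (m mod p)%nat); auto. pose proof (Nat.mod_upper_bound m p); lia.
Qed.

Lemma exact_period_unique p q x : exact_period p x -> exact_period q x -> p = q.
Proof.
  intros [Hp [Hp1 Hp2]] [Hq [Hq1 Hq2]].
  destruct (Nat.lt_trichotomy p q) as [H|[H|H]]; auto; exfalso.
  - apply (Hq2 p); auto; lia.
  - apply (Hp2 q); auto; lia.
Qed.

Lemma exact_period_exists m x : (1 <= m)%nat -> iter m g x = x -> exists p, exact_period p x.
Proof.
  intros Hm Hx.
  assert (H : forall n, (forall k, (1 <= k <= n)%nat -> iter k g x <> x) \/ exists p, exact_period p x).
  { induction n as [|n [H|H]]; [left; intros; lia| |right; auto].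
    destruct (Req_EM_T (iter (S n) g x) x) as [E|E].
    - right. exists (S n). repeat split; auto; [lia|]. intros k Hk; apply H; lia.
    - left. intros k Hk. destruct (Nat.eq_dec k (S n)) as [->|]; [auto|apply H; lia]. }
  destruct (H m) as [H'|H']; auto. exfalso; apply (H' m); auto.
Qed.

Lemma exact_period_shift p x k : exact_period p x -> exact_period p (iter k g x).
Proof.
  intros [Hp [H1 H2]]. split; auto. split; [rewrite iter_comm, H1; auto|].
  intros j Hj E. apply (H2 j Hj).
  assert (E2 : iter (k * (p - 1)) g (iter j g (iter k g x)) = iter (k * (p - 1)) g (iter k g x))
    by (rewrite E; auto).
  rewrite iter_comm, !iter_return in E2 by auto. exact E2.
Qed.

Lemma orbit_shift p x k y : exact_period p x -> (in_orbit g (iter k g x) y <-> in_orbit g x y).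
Proof.
  intros [Hp [H1 _]]. unfold in_orbit. split.
  - intros [j ->]. exists (j + k)%nat. symmetry; apply iter_add.
  - intros [j ->]. exists (j + k * (p - 1))%nat. rewrite iter_add, iter_return; auto.
Qed.

Definition orbit_list (p : nat) (x : R) : list R := map (fun k => iter k g x) (seq 0 p).

Lemma orbit_list_spec p x y : In y (orbit_list p x) <-> exists k, (k < p)%nat /\ y = iter k g x.
Proof.
  unfold orbit_list. rewrite in_map_iff. split.
  - intros [k [<- Hk]]. apply in_seq in Hk. exists k; split; auto; lia.
  - intros [k [Hk ->]]. exists k; split; auto. apply in_seq; lia.
Qed.

Lemma orbit_list_orbit p x y : exact_period p x -> (In y (orbit_list p x) <-> in_orbit g x y).
Proof.
  intros [Hp [H1 _]]. rewrite orbit_list_spec. unfold in_orbit. split.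
  - intros [k [_ ->]]. exists k; auto.
  - intros [k ->]. exists (k mod p)%nat. split; [apply Nat.mod_upper_bound; lia|apply iter_mod; auto].
Qed.

Lemma orbit_list_nodup p x : exact_period p x -> NoDup (orbit_list p x).
Proof.
  intros Hx. apply NoDup_map_NoDup_ForallPairs; [|apply seq_NoDup].
  assert (K : forall i j, (i < j < p)%nat -> iter i g x <> iter j g x).
  { intros i j Hij E. destruct Hx as [Hp [H1 H2]].
    assert (E2 : iter (p - j) g (iter i g x) = iter (p - j) g (iter j g x)) by (rewrite E; auto).
    rewrite <- !iter_add in E2. replace (p - j + j)%nat with p in E2 by lia. rewrite H1 in E2.
    apply (H2 (p - j + i)%nat); auto; lia. }
  intros i j Hi Hj E. apply in_seq in Hi, Hj.
  destruct (Nat.lt_trichotomy i j) as [H|[H|H]]; auto; exfalso.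
  - apply (K i j); auto; lia.
  - apply (K j i); auto; lia.
Qed.

Lemma orbit_list_length p x : length (orbit_list p x) = p.
Proof. unfold orbit_list. rewrite length_map, length_seq. auto. Qed.

Lemma min_period_iff m x : (1 <= m)%nat -> (min_period g m x <-> exact_period m x).
Proof.
  intros Hm. split.
  - intros [Hf [l [Hnd [Hl Hin]]]].
    destruct (exact_period_exists m x Hm Hf) as [p Hp].
    assert (P : Permutation l (orbit_list p x)).
    { apply NoDup_Permutation; auto; [apply orbit_list_nodup; auto|].
      intros y. rewrite Hin, orbit_list_orbit; auto. tauto. }
    apply Permutation_length in P. rewrite orbit_list_length in P. subst. auto.
  - intros Hp. split; [apply Hp|]. exists (orbit_list m x).
    split; [apply orbit_list_nodup; auto|]. split; [apply orbit_list_length|].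
    intros y; apply orbit_list_orbit; auto.
Qed.

(** Representatives of orbits: the minimum of each orbit. *)

Definition orbit_min (m : nat) (a : R) : Prop := forall k, (k < m)%nat -> a <= iter k g a.

Lemma orbit_min_unique m a b :
  exact_period m a -> exact_period m b -> orbit_min m a -> orbit_min m b ->
  in_orbit g a b -> a = b.
Proof.
  intros Ha Hb Ma Mb Hab.
  apply (orbit_list_orbit m a b Ha), orbit_list_spec in Hab. destruct Hab as [k [Hk Eb]].
  assert (Hba : in_orbit g b a).
  { rewrite Eb. apply (orbit_shift m a k a Ha). exists 0%nat; auto. }
  apply (orbit_list_orbit m b a Hb), orbit_list_spec in Hba. destruct Hba as [j [Hj Ea]].
  specialize (Ma k Hk). specialize (Mb j Hj). rewrite <- Eb in Ma. rewrite <- Ea in Mb. lra.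
Qed.

Lemma list_min_exists (l : list R) : l <> [] -> exists a, In a l /\ forall b, In b l -> a <= b.
Proof.
  induction l as [|x l IH]; intros H; [congruence|].
  destruct l as [|y l'].
  - exists x. split; [left; auto|]. intros b [<-|[]]; lra.
  - destruct (IH ltac:(discriminate)) as [a [Ha Hm]].
    destruct (Rle_dec x a).
    + exists x. split; [left; auto|]. intros b [<-|Hb]; [lra|]. specialize (Hm b Hb); lra.
    + exists a. split; [right; auto|]. intros b [<-|Hb]; [lra|]. auto.
Qed.

Lemma orbit_min_exists m x : exact_period m x -> exists k, orbit_min m (iter k g x).
Proof.
  intros Hx. destruct (list_min_exists (orbit_list m x)) as [a [Ha Ma]].
  { intros E. pose proof (orbit_list_length m x) as L. rewrite E in L. destruct Hx; simpl in L; lia. }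
  apply orbit_list_spec in Ha. destruct Ha as [k [Hk ->]]. exists k.
  intros j Hj. apply Ma, (orbit_list_orbit m x); auto.
  rewrite <- (orbit_shift m x k _ Hx). exists j; auto.
Qed.

End Orbits.

Section FiniteSums.

Local Open Scope Z_scope.

Definition sumZ (l : list Z) : Z := fold_right Z.add 0 l.

Lemma sumZ_app l1 l2 : sumZ (l1 ++ l2) = sumZ l1 + sumZ l2.
Proof. induction l1; simpl; auto. rewrite IHl1; lia. Qed.

Lemma sumZ_perm l1 l2 : Permutation l1 l2 -> sumZ l1 = sumZ l2.
Proof. induction 1; simpl; lia. Qed.

Context {A : Type}.

Lemma sumZ_ext (F G : A -> Z) l : (forall x, In x l -> F x = G x) -> sumZ (map F l) = sumZ (map G l).
Proof. induction l; simpl; auto. intros H. rewrite H, IHl; auto. Qed.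

Lemma sumZ_nonneg (F : A -> Z) l : (forall x, In x l -> 0 <= F x) -> 0 <= sumZ (map F l).
Proof. induction l as [|a l IH]; simpl; intros H; [lia|]. pose proof (H a (or_introl eq_refl)). pose proof (IH (fun x Hx => H x (or_intror Hx))). lia. Qed.

Lemma sumZ_mono (F G : A -> Z) l : (forall x, In x l -> F x <= G x) -> sumZ (map F l) <= sumZ (map G l).
Proof. induction l as [|a l IH]; simpl; intros H; [lia|]. pose proof (H a (or_introl eq_refl)). pose proof (IH (fun x Hx => H x (or_intror Hx))). lia. Qed.

Lemma sumZ_zero (F : A -> Z) l : (forall x, In x l -> F x = 0) -> sumZ (map F l) = 0.
Proof. intros H. rewrite (sumZ_ext F (fun _ => 0)) by auto. clear H. induction l; simpl; lia. Qed.

Lemma sumZ_scale c (F : A -> Z) l : c * sumZ (map F l) = sumZ (map (fun x => c * F x) l).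
Proof. induction l; simpl; lia. Qed.

Lemma sumZ_plus (F G : A -> Z) l : sumZ (map (fun x => F x + G x) l) = sumZ (map F l) + sumZ (map G l).
Proof. induction l; simpl; lia. Qed.

Lemma sumZ_filter_if (F : A -> Z) (P : A -> bool) l :
  sumZ (map F (filter P l)) = sumZ (map (fun x => if P x then F x else 0) l).
Proof. induction l as [|a l IH]; simpl; auto. destruct (P a); simpl; rewrite IH; lia. Qed.

Lemma sumZ_filter (F : A -> Z) (P : A -> bool) l :
  sumZ (map F l) = sumZ (map F (filter P l)) + sumZ (map F (filter (fun x => negb (P x)) l)).
Proof. induction l as [|a l IH]; simpl; auto. destruct (P a); simpl; rewrite IH; lia. Qed.

Lemma sumZ_single (F : A -> Z) l a :
  NoDup l -> In a l -> (forall x, In x l -> x <> a -> F x = 0) -> sumZ (map F l) = F a.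
Proof.
  induction 1 as [|x l Hx Hl IH]; intros Ha H; [destruct Ha|]. simpl.
  destruct Ha as [<-|Ha].
  - rewrite sumZ_zero; [lia|]. intros y Hy. apply H; [right; auto|]. intros ->; contradiction.
  - rewrite H; [|left; auto|intros ->; contradiction]. rewrite IH; auto. intros y Hy; apply H; right; auto.
Qed.

Lemma sumZ_exchange (F : A -> A -> Z) (Rel : A -> A -> bool) X Y :
  sumZ (map (fun x => sumZ (map (fun y => F x y) (filter (Rel x) Y))) X) =
  sumZ (map (fun y => sumZ (map (fun x => F x y) (filter (fun x => Rel x y) X))) Y).
Proof.
  rewrite (sumZ_ext _ (fun x => sumZ (map (fun y => if Rel x y then F x y else 0) Y)))
    by (intros; apply sumZ_filter_if).
  rewrite (sumZ_ext (fun y => sumZ (map (fun x => F x y) (filter (fun x => Rel x y) X)))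
                    (fun y => sumZ (map (fun x => if Rel x y then F x y else 0) X)))
    by (intros; apply sumZ_filter_if).
  induction X as [|x X IH]; simpl; [induction Y; simpl; auto|].
  rewrite IH, <- sumZ_plus. reflexivity.
Qed.

End FiniteSums.

Section Moebius.

Local Open Scope nat_scope.

Definition divisors (m : nat) : list nat := filter (fun d => m mod d =? 0) (seq 1 m).

Lemma PhiZ_divisors m phi : PhiZ m phi = sumZ (map (fun d => (moebius (m / d) * phi d)%Z) (divisors m)).
Proof. reflexivity. Qed.

Lemma divisors_spec n d : 1 <= n -> In d (divisors n) <-> 1 <= d /\ Nat.divide d n.
Proof.
  intros Hn. unfold divisors. rewrite filter_In, in_seq, Nat.eqb_eq, Nat.Lcm0.mod_divide. split.
  - intros [H1 H2]; split; auto; lia.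
  - intros [H1 H2]; split; auto. apply Nat.divide_pos_le in H2; lia.
Qed.

Lemma divisors_nodup m : NoDup (divisors m).
Proof. apply NoDup_filter, seq_NoDup. Qed.

Lemma divisors_self m : 1 <= m -> In m (divisors m).
Proof. intros Hm. apply divisors_spec; auto. split; auto. apply Nat.divide_refl. Qed.

Definition Prime (p : nat) : Prop := 1 < p /\ forall d, 1 < d < p -> ~ Nat.divide d p.

Lemma divide_dec d n : {Nat.divide d n} + {~ Nat.divide d n}.
Proof.
  destruct (Nat.eq_dec (n mod d) 0) as [H|H]; [left|right]; rewrite <- Nat.Lcm0.mod_divide; auto.
Qed.

Lemma is_primeb_spec p : is_primeb p = true <-> Prime p.
Proof.
  unfold is_primeb, Prime. rewrite andb_true_iff, Nat.ltb_lt, forallb_forall. split.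
  - intros [H1 H2]; split; auto. intros d Hd Hdiv.
    specialize (H2 d ltac:(apply in_seq; lia)). apply negb_true_iff, Nat.eqb_neq in H2.
    apply H2, Nat.Lcm0.mod_divide; auto.
  - intros [H1 H2]; split; auto. intros d Hd. apply in_seq in Hd.
    apply negb_true_iff, Nat.eqb_neq. rewrite Nat.Lcm0.mod_divide. apply H2; lia.
Qed.

Lemma prime_divisors_spec n q : 1 <= n -> In q (prime_divisors n) <-> Prime q /\ Nat.divide q n.
Proof.
  intros Hn. unfold prime_divisors.
  rewrite filter_In, in_seq, andb_true_iff, is_primeb_spec, Nat.eqb_eq, Nat.Lcm0.mod_divide.
  split; [tauto|]. intros [H1 H2]. pose proof (Nat.divide_pos_le q n ltac:(lia) H2).
  destruct H1 as [Hq1 Hq2]. repeat split; auto; lia.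
Qed.

Lemma prime_divisors_nodup n : NoDup (prime_divisors n).
Proof. apply NoDup_filter, seq_NoDup. Qed.

Lemma prime_coprime p a : Prime p -> ~ Nat.divide p a -> Nat.gcd p a = 1.
Proof.
  intros [Hp1 Hp2] Hpa.
  pose proof (Nat.gcd_divide_l p a) as Hl. pose proof (Nat.gcd_divide_r p a) as Hr.
  assert (Hle := Nat.divide_pos_le (Nat.gcd p a) p ltac:(lia) Hl).
  destruct (Nat.eq_dec (Nat.gcd p a) p) as [E|Hne]; [rewrite E in Hr; contradiction|].
  destruct (Nat.eq_dec (Nat.gcd p a) 0) as [E|]; [apply Nat.gcd_eq_0 in E; lia|].
  destruct (Nat.eq_dec (Nat.gcd p a) 1); auto. exfalso; apply (Hp2 (Nat.gcd p a)); auto; lia.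
Qed.

Lemma prime_divide_mul p a b : Prime p -> Nat.divide p (a * b) -> Nat.divide p a \/ Nat.divide p b.
Proof.
  intros Hp H. destruct (divide_dec p a) as [Ha|Ha]; [left; auto|right].
  apply Nat.gauss with a; auto. apply prime_coprime; auto.
Qed.

Lemma prime_divide_prime q p : Prime q -> Prime p -> Nat.divide q p -> q = p.
Proof.
  intros [Hq _] [Hp1 Hp2] Hd. destruct (Nat.eq_dec q p); auto. exfalso.
  apply (Hp2 q); auto. apply Nat.divide_pos_le in Hd; lia.
Qed.

Lemma forallb_false {A : Type} (f : A -> bool) l : forallb f l = false -> exists x, In x l /\ f x = false.
Proof.
  induction l as [|a l IH]; simpl; [discriminate|]. intros H.
  destruct (f a) eqn:E; simpl in H; [destruct (IH H) as [x [H1 H2]]; exists x|exists a]; auto.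
Qed.

Lemma prime_factor_exists n : 1 < n -> exists p, Prime p /\ Nat.divide p n.
Proof.
  induction n as [n IH] using lt_wf_ind. intros Hn.
  destruct (is_primeb n) eqn:E.
  - exists n. split; [apply is_primeb_spec; auto|apply Nat.divide_refl].
  - unfold is_primeb in E. apply andb_false_iff in E as [E|E]; [apply Nat.ltb_ge in E; lia|].
    apply forallb_false in E as [d [Hd Hf]]. apply in_seq in Hd.
    apply negb_false_iff, Nat.eqb_eq, Nat.Lcm0.mod_divide in Hf.
    destruct (IH d ltac:(lia) ltac:(lia)) as [p [Hp Hpd]].
    exists p. split; auto. apply Nat.divide_trans with d; auto.
Qed.

Lemma squarefreeb_spec n : 1 <= n -> squarefreeb n = true <->
  forall q, Prime q -> Nat.divide q n -> ~ Nat.divide (q * q) n.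
Proof.
  intros Hn. unfold squarefreeb. rewrite forallb_forall. split.
  - intros H q Hq Hd Hd2. specialize (H q (proj2 (prime_divisors_spec n q Hn) (conj Hq Hd))).
    apply negb_true_iff, Nat.eqb_neq in H. apply H, Nat.Lcm0.mod_divide; auto.
  - intros H q Hq. apply prime_divisors_spec in Hq as [Hq Hd]; auto.
    apply negb_true_iff, Nat.eqb_neq. rewrite Nat.Lcm0.mod_divide. apply H; auto.
Qed.

Lemma moebius_square_divisor p n : Prime p -> 1 <= n -> Nat.divide (p * p) n -> moebius n = 0%Z.
Proof.
  intros Hp Hn Hd. unfold moebius. destruct (squarefreeb n) eqn:E; auto.
  exfalso. apply (proj1 (squarefreeb_spec n Hn) E p Hp); auto.
  apply Nat.divide_trans with (p * p); auto. exists p. lia.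
Qed.

Lemma square_divide_mul_prime q p e :
  Prime q -> Prime p -> q <> p -> Nat.divide (q * q) (p * e) -> Nat.divide (q * q) e.
Proof.
  intros Hq Hp Hne H.
  assert (Hqp : ~ Nat.divide q p) by (intros Hd; apply Hne, prime_divide_prime; auto).
  assert (Hq0 : q <> 0) by (destruct Hq; lia).
  destruct H as [t Ht].
  assert (H1 : Nat.divide q e).
  { destruct (prime_divide_mul q p e Hq) as [H|H]; [exists (t * q); lia|contradiction|auto]. }
  destruct H1 as [e1 ->].
  assert (H2 : Nat.divide q e1).
  { destruct (prime_divide_mul q p e1 Hq) as [H|H]; [|contradiction|auto].
    exists t. apply (Nat.mul_cancel_r _ _ q Hq0). lia. }
  destruct H2 as [e2 ->]. exists e2. lia.
Qed.

Lemma moebius_mul_prime p e : Prime p -> 1 <= e -> ~ Nat.divide p e -> moebius (p * e) = (- moebius e)%Z.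
Proof.
  intros Hp He Hpe. assert (Hp2 : 2 <= p) by (destruct Hp; lia).
  assert (Hpe1 : 1 <= p * e) by nia.
  assert (P : Permutation (prime_divisors (p * e)) (p :: prime_divisors e)).
  { apply NoDup_Permutation; [apply prime_divisors_nodup| |].
    - constructor; [|apply prime_divisors_nodup]. rewrite prime_divisors_spec by auto. tauto.
    - intros q. simpl. rewrite !prime_divisors_spec by auto. split.
      + intros [Hq Hd]. destruct (prime_divide_mul q p e Hq Hd) as [H|H].
        * left. symmetry. apply prime_divide_prime; auto.
        * right; auto.
      + intros [<-|[Hq Hd]]; split; auto.
        * exists e. lia.
        * apply Nat.divide_mul_r; auto. }
  assert (S : squarefreeb (p * e) = squarefreeb e).
  { apply eq_true_iff_eq. rewrite !squarefreeb_spec by auto. split.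
    - intros H q Hq Hd Hd2. apply (H q Hq); apply Nat.divide_mul_r; auto.
    - intros H q Hq Hd Hd2. destruct (Nat.eq_dec q p) as [->|Hne].
      + apply Hpe. destruct Hd2 as [t Ht]. exists t. apply (Nat.mul_cancel_l _ _ p); lia.
      + apply (H q Hq); [|apply (square_divide_mul_prime q p e); auto].
        destruct (prime_divide_mul q p e Hq Hd) as [H1|H1]; auto.
        exfalso; apply Hne, prime_divide_prime; auto. }
  unfold moebius. rewrite S. destruct (squarefreeb e); auto.
  rewrite (Permutation_length P). simpl length. rewrite Nat2Z.inj_succ, Z.pow_succ_r by lia. lia.
Qed.

Lemma divisors_exactly_p n p : 1 <= n -> Prime p -> Nat.divide p n ->
  Permutation (filter (fun d => negb (d mod (p * p) =? 0)) (filter (fun d => d mod p =? 0) (divisors n)))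
              (map (Nat.mul p) (filter (fun d => negb (d mod p =? 0)) (divisors n))).
Proof.
  intros Hn Hp Hpn. assert (Hp2 : 2 <= p) by (destruct Hp; lia).
  apply NoDup_Permutation.
  - apply NoDup_filter, NoDup_filter, divisors_nodup.
  - apply NoDup_map_NoDup_ForallPairs; [|apply NoDup_filter, divisors_nodup].
    intros x y _ _ E. apply (Nat.mul_cancel_l _ _ p); lia.
  - intros d. rewrite in_map_iff, !filter_In, divisors_spec, negb_true_iff, Nat.eqb_eq,
      Nat.eqb_neq, !Nat.Lcm0.mod_divide by auto. split.
    + intros [[[Hd1 Hdn] [t ->]] Hsq]. exists t.
      rewrite filter_In, divisors_spec, negb_true_iff, Nat.eqb_neq, Nat.Lcm0.mod_divide by auto.
      split; [lia|]. split; [split; [nia|]|].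
      * apply Nat.divide_trans with (t * p); auto. apply Nat.divide_factor_l.
      * intros [v ->]. apply Hsq. exists v. lia.
    + intros [e [<- He]].
      rewrite filter_In, divisors_spec, negb_true_iff, Nat.eqb_neq, Nat.Lcm0.mod_divide in He by auto.
      destruct He as [[He1 [k Hk]] Hpe]. split; [split; [split; [nia|]|]|].
      * destruct (prime_divide_mul p e k Hp) as [H|H]; [replace (e * k) with n by lia; auto|contradiction|].
        destruct H as [j ->]. exists j. lia.
      * exists e. lia.
      * intros [t Ht]. apply Hpe. exists t. apply (Nat.mul_cancel_l _ _ p); lia.
Qed.

Lemma moebius_divisor_sum n : 1 <= n ->
  sumZ (map moebius (divisors n)) = if n =? 1 then 1%Z else 0%Z.
Proof.
  intros Hn. destruct (Nat.eqb_spec n 1) as [->|Hn1]; [reflexivity|].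
  destruct (prime_factor_exists n ltac:(lia)) as [p [Hp Hpn]].
  assert (Hp2 : 2 <= p) by (destruct Hp; lia).
  rewrite (sumZ_filter moebius (fun d => d mod p =? 0)).
  rewrite (sumZ_filter moebius (fun d => d mod (p * p) =? 0) (filter _ _)).
  rewrite (sumZ_zero moebius (filter _ (filter _ _))).
  2:{ intros d Hd. rewrite !filter_In, divisors_spec, !Nat.eqb_eq, !Nat.Lcm0.mod_divide in Hd by auto.
      apply (moebius_square_divisor p d); tauto. }
  rewrite (sumZ_perm _ _ (Permutation_map moebius (divisors_exactly_p n p Hn Hp Hpn))), map_map.
  rewrite (sumZ_ext _ (fun e => - moebius e)%Z).
  - rewrite <- (sumZ_scale (-1)). lia.
  - intros e He. rewrite filter_In, divisors_spec, negb_true_iff, Nat.eqb_neq, Nat.Lcm0.mod_divide in He by auto.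
    apply moebius_mul_prime; tauto.
Qed.

Lemma divisors_of_divisor d m : 1 <= m -> In d (divisors m) ->
  Permutation (divisors d) (filter (fun e => d mod e =? 0) (divisors m)).
Proof.
  intros Hm Hd. apply divisors_spec in Hd as [Hd1 Hdm]; auto.
  apply NoDup_Permutation; [apply divisors_nodup|apply NoDup_filter, divisors_nodup|].
  intros e. rewrite filter_In, !divisors_spec, Nat.eqb_eq, Nat.Lcm0.mod_divide by auto.
  split; [intros [H1 H2]; repeat split; auto; apply Nat.divide_trans with d; auto|tauto].
Qed.

Lemma complementary_divisors e m : 1 <= m -> In e (divisors m) ->
  Permutation (map (fun d => m / d) (filter (fun d => d mod e =? 0) (divisors m))) (divisors (m / e)).
Proof.
  intros Hm He. apply divisors_spec in He as [He1 [a Ha]]; auto.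
  assert (Ha1 : 1 <= a) by nia.
  assert (Eme : m / e = a) by (rewrite Ha; apply Nat.div_mul; lia).
  assert (Hcodiv : forall d, 1 <= d -> Nat.divide d m -> m / (m / d) = d).
  { intros d Hd [q Hq]. rewrite Hq, Nat.div_mul, Nat.mul_comm, Nat.div_mul by nia. reflexivity. }
  rewrite Eme. apply NoDup_Permutation.
  - apply NoDup_map_NoDup_ForallPairs; [|apply NoDup_filter, divisors_nodup].
    intros x y Hx Hy E. rewrite filter_In, divisors_spec in Hx, Hy by auto.
    rewrite <- (Hcodiv x), <- (Hcodiv y), E by tauto. reflexivity.
  - apply divisors_nodup.
  - intros k. rewrite in_map_iff, divisors_spec by auto. split.
    + intros [d [<- Hd]]. rewrite filter_In, divisors_spec, Nat.eqb_eq, Nat.Lcm0.mod_divide in Hd by auto.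
      destruct Hd as [[Hd1 [c Hc]] [b ->]].
      rewrite Hc, Nat.div_mul by lia. split; [nia|]. exists b.
      apply (Nat.mul_cancel_r _ _ e); lia.
    + intros [Hk [c Hc]]. exists (e * c). split.
      * rewrite Ha, Hc. replace (c * k * e) with (k * (e * c)) by lia. apply Nat.div_mul. nia.
      * rewrite filter_In, divisors_spec, Nat.eqb_eq, Nat.Lcm0.mod_divide by auto.
        split; [split; [nia|exists k; lia]|apply Nat.divide_factor_l].
Qed.

Lemma sum_moebius_multiples e m : 1 <= m -> In e (divisors m) ->
  sumZ (map (fun d => moebius (m / d)) (filter (fun d => d mod e =? 0) (divisors m))) =
  if e =? m then 1%Z else 0%Z.
Proof.
  intros Hm He. rewrite <- (map_map (fun d => m / d) moebius).
  rewrite (sumZ_perm _ _ (Permutation_map moebius (complementary_divisors e m Hm He))).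
  apply divisors_spec in He as [He1 [a ->]]; auto. rewrite Nat.div_mul by lia.
  rewrite moebius_divisor_sum by nia.
  destruct (Nat.eqb_spec a 1), (Nat.eqb_spec e (a * e)); auto; nia.
Qed.

Theorem moebius_inversion (g G : nat -> Z) m : 1 <= m ->
  (forall n, 1 <= n -> G n = sumZ (map g (divisors n))) -> PhiZ m G = g m.
Proof.
  intros Hm HG. rewrite PhiZ_divisors.
  set (Rel := fun d e => d mod e =? 0).
  rewrite (sumZ_ext _ (fun d => sumZ (map (fun e => moebius (m / d) * g e) (filter (Rel d) (divisors m))))%Z).
  2:{ intros d Hd. rewrite HG, sumZ_scale by (apply divisors_spec in Hd; tauto).
      apply sumZ_perm, Permutation_map, divisors_of_divisor; auto. }
  rewrite (sumZ_exchange (fun d e => moebius (m / d) * g e)%Z Rel).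
  rewrite (sumZ_single _ (divisors m) m); [| apply divisors_nodup | apply divisors_self; auto |].
  - rewrite <- (sumZ_ext (fun d => g m * moebius (m / d))%Z) by (intros; lia).
    rewrite <- sumZ_scale. unfold Rel. rewrite sum_moebius_multiples, Nat.eqb_refl by (auto; apply divisors_self; auto).
    lia.
  - intros e He Hne.
    rewrite <- (sumZ_ext (fun d => g e * moebius (m / d))%Z) by (intros; lia).
    rewrite <- sumZ_scale. unfold Rel. rewrite sum_moebius_multiples by auto.
    apply Nat.eqb_neq in Hne. rewrite Hne. lia.
Qed.

End Moebius.

Definition eqRb (x y : R) : bool := if Req_EM_T x y then true else false.

Definition exact_periodb (d : nat) (x : R) : bool :=
  eqRb (iter d fmap x) x && forallb (fun k => negb (eqRb (iter k fmap x) x)) (seq 1 (d - 1)).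

Lemma exact_periodb_spec d x : (1 <= d)%nat -> exact_periodb d x = true <-> exact_period fmap d x.
Proof.
  intros Hd. unfold exact_periodb, exact_period, eqRb. rewrite andb_true_iff, forallb_forall. split.
  - intros [H1 H2]. destruct Req_EM_T; [|discriminate]. repeat split; auto.
    intros k Hk E. specialize (H2 k ltac:(apply in_seq; lia)). destruct Req_EM_T; [discriminate|auto].
  - intros [_ [H1 H2]]. destruct Req_EM_T; [|contradiction]. split; auto.
    intros k Hk. apply in_seq in Hk. destruct Req_EM_T; auto. exfalso; apply (H2 k); auto; lia.
Qed.

Definition exact_period_points (d : nat) : list R := filter (exact_periodb d) (periodic_points d).

Lemma exact_period_points_spec d x :
  (1 <= d)%nat -> In x (exact_period_points d) <-> (1 <= x <= 3 /\ exact_period fmap d x).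
Proof.
  intros Hd. unfold exact_period_points. rewrite filter_In, periodic_points_spec, exact_periodb_spec by auto.
  unfold exact_period. tauto.
Qed.

Lemma exact_period_points_nodup d : (1 <= d)%nat -> NoDup (exact_period_points d).
Proof. intros; apply NoDup_filter, periodic_points_nodup; auto. Qed.

Lemma count_partition {A : Type} (l : list A) (D : list nat) (P : nat -> A -> bool) :
  (forall x, In x l -> length (filter (fun d => P d x) D) = 1%nat) ->
  Z.of_nat (length l) = sumZ (map (fun d => Z.of_nat (length (filter (P d) l))) D).
Proof.
  induction l as [|x l IH]; intros H.
  - rewrite sumZ_zero; auto.
  - assert (E : forall D', sumZ (map (fun d => Z.of_nat (length (filter (P d) (x :: l)))) D') =
       (Z.of_nat (length (filter (fun d => P d x) D')) +
        sumZ (map (fun d => Z.of_nat (length (filter (P d) l))) D'))%Z).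
    { induction D' as [|d D' IHD]; [reflexivity|]. cbn [map sumZ fold_right].
      fold (sumZ (map (fun d => Z.of_nat (length (filter (P d) (x :: l)))) D')).
      fold (sumZ (map (fun d => Z.of_nat (length (filter (P d) l))) D')).
      rewrite IHD. cbn [filter]. destruct (P d x); simpl length; lia. }
    rewrite E, H by (left; auto). rewrite <- IH by (intros; apply H; right; auto). simpl length. lia.
Qed.

(* Every fixed point of [f^m] has exactly one exact period among the divisors of [m]. *)
Lemma lucas_divisor_sum m : (1 <= m)%nat ->
  lucas m = sumZ (map (fun d => Z.of_nat (length (exact_period_points d))) (divisors m)).
Proof.
  intros Hm. rewrite <- periodic_points_count by auto.
  rewrite (count_partition _ (divisors m) exact_periodb).
  - apply sumZ_ext. intros d Hd. apply divisors_spec in Hd as [Hd1 Hdm]; auto. f_equal.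
    apply Permutation_length, NoDup_Permutation.
    + apply NoDup_filter, periodic_points_nodup; auto.
    + apply exact_period_points_nodup; auto.
    + intros x. rewrite filter_In, exact_period_points_spec, !periodic_points_spec, exact_periodb_spec by auto.
      split; [tauto|]. intros [H1 H3]. split; [split; [exact H1|]|exact H3].
      destruct Hdm as [q ->]. apply iter_mul, H3.
  - intros x Hx. apply periodic_points_spec in Hx as [Hx Hf]; auto.
    destruct (exact_period_exists fmap m x Hm Hf) as [p Hp].
    replace 1%nat with (length [p]) by reflexivity. apply Permutation_length, NoDup_Permutation.
    + apply NoDup_filter, divisors_nodup.
    + repeat constructor; auto.
    + intros d. rewrite filter_In, divisors_spec by auto. simpl. split.
      * intros [[H1 _] H2]. apply exact_periodb_spec in H2; [|lia].
        left. apply (exact_period_unique fmap p d x); auto.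
      * intros [<-|[]]. pose proof Hp as [Hp1 _].
        rewrite exact_periodb_spec by auto. split; [split; auto|exact Hp].
        apply (exact_period_divides fmap p x m); auto.
Qed.

Lemma Phi1_exact_period_count m : (1 <= m)%nat -> Phi1 m = Z.of_nat (length (exact_period_points m)).
Proof.
  intros Hm. apply (moebius_inversion (fun d => Z.of_nat (length (exact_period_points d))) lucas m Hm).
  intros; apply lucas_divisor_sum; auto.
Qed.

Definition orbit_minb (m : nat) (x : R) : bool :=
  forallb (fun k => if Rle_dec x (iter k fmap x) then true else false) (seq 0 m).

Lemma orbit_minb_spec m x : orbit_minb m x = true <-> orbit_min fmap m x.
Proof.
  unfold orbit_minb, orbit_min. rewrite forallb_forall. split.
  - intros H k Hk. specialize (H k ltac:(apply in_seq; lia)). destruct Rle_dec; auto; discriminate.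
  - intros H k Hk. apply in_seq in Hk. destruct Rle_dec; auto. exfalso; apply n, H; lia.
Qed.

Definition orbit_reps (m : nat) : list R := filter (orbit_minb m) (exact_period_points m).

Lemma orbit_reps_spec m a : (1 <= m)%nat -> In a (orbit_reps m) <->
  (1 <= a <= 3 /\ exact_period fmap m a /\ orbit_min fmap m a).
Proof.
  intros Hm. unfold orbit_reps. rewrite filter_In, exact_period_points_spec, orbit_minb_spec by auto. tauto.
Qed.

Lemma orbit_reps_nodup m : (1 <= m)%nat -> NoDup (orbit_reps m).
Proof. intros; apply NoDup_filter, exact_period_points_nodup; auto. Qed.

Lemma orbit_reps_cover m x : (1 <= m)%nat -> 1 <= x <= 3 -> exact_period fmap m x ->
  exists k, In (iter k fmap x) (orbit_reps m).
Proof.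
  intros Hm Hx Hp. destruct (orbit_min_exists fmap m x Hp) as [k Hk]. exists k.
  apply orbit_reps_spec; auto. split; [apply iter_interval; auto|split; auto].
  apply exact_period_shift; auto.
Qed.

Lemma NoDup_flat_map {A B : Type} (F : A -> list B) (L : list A) :
  (forall a, In a L -> NoDup (F a)) ->
  (forall a b y, In a L -> In b L -> In y (F a) -> In y (F b) -> a = b) ->
  NoDup L -> NoDup (flat_map F L).
Proof.
  intros H1 H2 HL. induction HL as [|a L Ha HL IH]; simpl; [constructor|].
  apply NoDup_app.
  - apply H1; left; auto.
  - apply IH; [intros; apply H1; right; auto|intros; eapply H2; eauto; right; auto].
  - intros y Hy Hy'. apply in_flat_map in Hy' as [b [Hb Hyb]].
    assert (a = b) by (eapply H2; eauto; [left; auto|right; auto]). subst; contradiction.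
Qed.

Lemma exact_period_points_orbits m : (1 <= m)%nat ->
  Permutation (exact_period_points m) (flat_map (orbit_list fmap m) (orbit_reps m)).
Proof.
  intros Hm. apply NoDup_Permutation.
  - apply exact_period_points_nodup; auto.
  - apply NoDup_flat_map; [| |apply orbit_reps_nodup; auto].
    + intros a Ha. apply orbit_reps_spec in Ha; auto. apply orbit_list_nodup; tauto.
    + intros a b y Ha Hb Hya Hyb. apply orbit_reps_spec in Ha as [_ [Pa Ma]], Hb as [_ [Pb Mb]]; auto.
      apply (orbit_min_unique fmap m a b Pa Pb Ma Mb).
      apply orbit_list_spec in Hya as [i [_ ->]], Hyb as [j [_ Ej]].
      apply (orbit_shift fmap m a i b Pa). rewrite Ej. apply (orbit_shift fmap m b j b Pb). exists 0%nat; auto.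
  - intros y. rewrite in_flat_map, exact_period_points_spec by auto. split.
    + intros [Hy Py]. destruct (orbit_reps_cover m y Hm Hy Py) as [k Hk].
      exists (iter k fmap y). split; auto.
      apply (orbit_list_orbit fmap m); [apply exact_period_shift; auto|].
      apply (orbit_shift fmap m y k y Py). exists 0%nat; auto.
    + intros [a [Ha Hya]]. apply orbit_reps_spec in Ha as [Ha [Pa _]]; auto.
      apply orbit_list_spec in Hya as [k [_ ->]].
      split; [apply iter_interval|apply exact_period_shift]; auto.
Qed.

Lemma orbit_reps_count m : (1 <= m)%nat -> length (exact_period_points m) = (m * length (orbit_reps m))%nat.
Proof.
  intros Hm. rewrite (Permutation_length (exact_period_points_orbits m Hm)).
  rewrite (flat_map_constant_length (c := m)) by (intros; apply orbit_list_length). lia.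
Qed.

Theorem part_b m : (1 <= m)%nat ->
  exists reps : list R,
    (forall a, In a reps -> 1 <= a <= 3 /\ min_period fmap m a) /\
    (forall i j, (i < length reps)%nat -> (j < length reps)%nat -> i <> j ->
       ~ (forall y, in_orbit fmap (nth i reps 0) y <-> in_orbit fmap (nth j reps 0) y)) /\
    (forall x, 1 <= x <= 3 -> min_period fmap m x ->
       exists a, In a reps /\ (forall y, in_orbit fmap a y <-> in_orbit fmap x y)) /\
    INR (length reps) = Phi1_over m.
Proof.
  intros Hm. exists (orbit_reps m). split; [|split; [|split]].
  - intros a Ha. apply orbit_reps_spec in Ha; auto. rewrite min_period_iff by auto. tauto.
  - intros i j Hi Hj Hij Heq. apply Hij.
    apply (proj1 (NoDup_nth (orbit_reps m) 0) (orbit_reps_nodup m Hm) i j Hi Hj).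
    pose proof (nth_In (orbit_reps m) 0 Hi) as Ia. pose proof (nth_In (orbit_reps m) 0 Hj) as Ib.
    apply orbit_reps_spec in Ia as [_ [Pa Ma]], Ib as [_ [Pb Mb]]; auto.
    apply (orbit_min_unique fmap m _ _ Pa Pb Ma Mb). apply Heq. exists 0%nat; auto.
  - intros x Hx Hmp. apply min_period_iff in Hmp; auto.
    destruct (orbit_reps_cover m x Hm Hx Hmp) as [k Hk].
    exists (iter k fmap x). split; auto. intros y. apply (orbit_shift fmap m x k y Hmp).
  - unfold Phi1_over. rewrite Phi1_exact_period_count, orbit_reps_count by auto.
    rewrite <- INR_IZR_INZ, mult_INR. field. apply not_0_INR; lia.
Qed.

Section Lucas.

Local Open Scope Z_scope.

Lemma lucas_rec n : lucas (S (S n)) = lucas (S n) + lucas n.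
Proof. reflexivity. Qed.

Lemma lucas_rec_pred n : (2 <= n)%nat -> lucas n = lucas (n - 1) + lucas (n - 2).
Proof.
  intros Hn. replace n with (S (S (n - 2))) at 1 by lia. rewrite lucas_rec.
  replace (S (n - 2)) with (n - 1)%nat by lia. reflexivity.
Qed.

Lemma lucas_pos n : 1 <= lucas n.
Proof.
  enough (H : 1 <= lucas n /\ 1 <= lucas (S n)) by apply H.
  induction n as [|n [H1 H2]]; [simpl; lia|]. split; auto. rewrite lucas_rec; lia.
Qed.

Lemma lucas_mono a b : (1 <= a <= b)%nat -> lucas a <= lucas b.
Proof.
  intros [Ha Hab]. induction Hab as [|b Hab IH]; [lia|].
  destruct b as [|b]; [lia|]. rewrite lucas_rec. pose proof (lucas_pos b). lia.
Qed.

Lemma lucas_ge_index n : Z.of_nat n <= lucas n.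
Proof.
  enough (H : Z.of_nat n <= lucas n /\ Z.of_nat (S n) <= lucas (S n)) by apply H.
  induction n as [|n [H1 H2]]; [simpl; lia|]. split; auto. rewrite lucas_rec.
  pose proof (lucas_pos n). lia.
Qed.

Lemma lucas_partial_sum k : sumZ (map lucas (seq 1 k)) = lucas (k + 2) - 3.
Proof.
  induction k as [|k IH]; [reflexivity|]. rewrite seq_S, map_app, sumZ_app, IH.
  replace (S k + 2)%nat with (S (S (k + 1))) by lia. rewrite lucas_rec.
  replace (k + 2)%nat with (S (k + 1)) by lia. replace (1 + k)%nat with (k + 1)%nat by lia. simpl. lia.
Qed.

Lemma lucas_half n : (7 <= n)%nat -> (Z.of_nat n + 1) * lucas (n / 2 + 2) <= 4 * lucas n.
Proof.
  induction n as [n IH] using lt_wf_ind. intros Hn.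
  destruct (le_lt_dec 9 n) as [H9|H9].
  - specialize (IH (n - 2)%nat ltac:(lia) ltac:(lia)).
    assert (Hd : (n / 2 = (n - 2) / 2 + 1)%nat).
    { replace n with ((n - 2) + 1 * 2)%nat at 1 by lia. apply Nat.div_add; lia. }
    rewrite Hd. set (a := ((n - 2) / 2 + 2)%nat) in *.
    replace ((n - 2) / 2 + 1 + 2)%nat with (S a) by (unfold a; lia).
    assert (Ha2 : (2 <= a)%nat) by (unfold a; lia).
    pose proof (lucas_rec_pred (S a) ltac:(lia)) as E1. replace (S a - 1)%nat with a in E1 by lia.
    assert (M1 : lucas (S a - 2) <= lucas a) by (apply lucas_mono; lia).
    pose proof (lucas_rec_pred n ltac:(lia)) as E2.
    pose proof (lucas_rec_pred (n - 1) ltac:(lia)) as E3.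
    pose proof (lucas_rec_pred (n - 2) ltac:(lia)) as E4.
    replace (n - 1 - 1)%nat with (n - 2)%nat in E3 by lia.
    replace (n - 1 - 2)%nat with (n - 3)%nat in E3 by lia.
    replace (n - 2 - 1)%nat with (n - 3)%nat in E4 by lia.
    replace (n - 2 - 2)%nat with (n - 4)%nat in E4 by lia.
    assert (M2 : lucas (n - 4) <= lucas (n - 3)) by (apply lucas_mono; lia).
    rewrite Nat2Z.inj_sub in IH by lia.
    pose proof (lucas_pos a). assert (Hz : 9 <= Z.of_nat n) by lia.
    nia.
  - assert (n = 7 \/ n = 8)%nat as [E|E] by lia; subst n; vm_compute; intros; discriminate.
Qed.

End Lucas.

Section Monotonicity.

Local Open Scope Z_scope.

Lemma exact_period_count_le_lucas m : (1 <= m)%nat -> Z.of_nat (length (exact_period_points m)) <= lucas m.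
Proof.
  intros Hm. rewrite <- periodic_points_count by auto.
  pose proof (filter_length_le (exact_periodb m) (periodic_points m)). unfold exact_period_points. lia.
Qed.

Lemma Phi1_le_lucas m : (1 <= m)%nat -> 0 <= Phi1 m <= lucas m.
Proof.
  intros Hm. rewrite Phi1_exact_period_count by auto.
  pose proof (exact_period_count_le_lucas m Hm). lia.
Qed.

Lemma sumZ_le_incl (F : nat -> Z) l l' : NoDup l -> NoDup l' -> incl l l' -> (forall x, 0 <= F x) ->
  sumZ (map F l) <= sumZ (map F l').
Proof.
  intros H1 H2 Hi HF. set (inl := fun x => if in_dec Nat.eq_dec x l then true else false).
  rewrite (sumZ_filter F inl l').
  assert (P : Permutation (filter inl l') l).
  { apply NoDup_Permutation; [apply NoDup_filter; auto|auto|].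
    intros x. rewrite filter_In. unfold inl. destruct (in_dec Nat.eq_dec x l); split; intuition. discriminate. }
  rewrite (sumZ_perm _ _ (Permutation_map F P)).
  pose proof (sumZ_nonneg F (filter (fun x => negb (inl x)) l') (fun x _ => HF x)). lia.
Qed.

Lemma lucas_le_Phi1_plus m : (1 <= m)%nat -> lucas m <= Phi1 m + (lucas (m / 2 + 2) - 3).
Proof.
  intros Hm. set (P := fun d => Z.of_nat (length (exact_period_points d))).
  rewrite Phi1_exact_period_count, lucas_divisor_sum by auto.
  rewrite (sumZ_filter P (fun d => d =? m)%nat).
  assert (Hself : Permutation (filter (fun d => d =? m)%nat (divisors m)) [m]).
  { apply NoDup_Permutation; [apply NoDup_filter, divisors_nodup|repeat constructor; auto|].
    intros x. rewrite filter_In, Nat.eqb_eq. simpl.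
    split; [intros [_ ->]; auto|intros [<-|[]]; split; auto; apply divisors_self; auto]. }
  rewrite (sumZ_perm _ _ (Permutation_map P Hself)). change (sumZ (map P [m])) with (P m + 0).
  set (proper := filter (fun d => negb (d =? m)%nat) (divisors m)).
  assert (Hproper : forall d, In d proper -> (1 <= d <= m / 2)%nat).
  { intros d Hd. unfold proper in Hd.
    rewrite filter_In, divisors_spec, negb_true_iff, Nat.eqb_neq in Hd by auto.
    destruct Hd as [[Hd1 [q Hq]] Hne]. split; auto.
    assert (q <> 0%nat) by (intro; subst; lia). assert (q <> 1%nat) by (intro; subst; lia).
    apply Nat.div_le_lower_bound; nia. }
  assert (H1 : sumZ (map P proper) <= sumZ (map lucas proper)).
  { apply sumZ_mono. intros d Hd. apply exact_period_count_le_lucas. apply Hproper in Hd. lia. }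
  assert (H2 : sumZ (map lucas proper) <= sumZ (map lucas (seq 1 (m / 2)))).
  { apply sumZ_le_incl; [apply NoDup_filter, divisors_nodup|apply seq_NoDup| |].
    - intros d Hd. apply Hproper in Hd. apply in_seq. lia.
    - intros; pose proof (lucas_pos x); lia. }
  rewrite lucas_partial_sum in H2. change (Z.of_nat (length (exact_period_points m))) with (P m). lia.
Qed.

(* Cross-multiplied form of [Phi1_over m < Phi1_over (m+1)] for [m >= 10]. *)
Lemma Phi1_ratio_increasing_large m : (10 <= m)%nat -> Z.of_nat (S m) * Phi1 m < Z.of_nat m * Phi1 (S m).
Proof.
  intros Hm.
  destruct (Phi1_le_lucas m ltac:(lia)) as [_ H1].
  pose proof (lucas_le_Phi1_plus (S m) ltac:(lia)) as H3.
  set (k := (S m / 2)%nat) in *.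
  assert (Hk : (k + 4 <= m - 1)%nat).
  { unfold k. pose proof (Nat.div_mod (S m) 2 ltac:(lia)). pose proof (Nat.mod_upper_bound (S m) 2 ltac:(lia)). lia. }
  pose proof (lucas_rec_pred (S m) ltac:(lia)) as E1. replace (S m - 1)%nat with m in E1 by lia.
  replace (S m - 2)%nat with (m - 1)%nat in E1 by lia.
  pose proof (lucas_rec_pred m ltac:(lia)) as E2.
  assert (M1 : lucas (m - 2) <= lucas (m - 1)) by (apply lucas_mono; lia).
  (* [2 lucas (k+2) <= lucas (k+4) <= lucas (m-1)] *)
  assert (M2 : 2 * lucas (k + 2) <= lucas (m - 1)).
  { assert (H : lucas (k + 4) <= lucas (m - 1)) by (apply lucas_mono; lia).
    replace (k + 4)%nat with (S (S (S (k + 1)))) in H by lia.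
    rewrite !lucas_rec in H. replace (S (k + 1)) with (k + 2)%nat in H by lia.
    pose proof (lucas_pos (k + 1)). lia. }
  pose proof (lucas_pos (k + 2)). pose proof (lucas_pos (m - 1)).
  rewrite Nat2Z.inj_succ. set (z := Z.of_nat m) in *. assert (Hz : 10 <= z) by (unfold z; lia).
  set (A := lucas (m - 1)) in *. set (D := lucas (k + 2)) in *.
  assert (z * Phi1 (S m) >= z * (lucas (S m) - D + 3)) by nia.
  assert ((z + 1) * Phi1 m <= (z + 1) * lucas m) by nia.
  rewrite E1 in *. nia.
Qed.

Lemma Phi1_ratio_increasing m : (6 <= m)%nat -> Z.of_nat (S m) * Phi1 m < Z.of_nat m * Phi1 (S m).
Proof.
  intros Hm. destruct (le_lt_dec 10 m) as [H|H]; [apply Phi1_ratio_increasing_large; auto|].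
  assert (m = 6 \/ m = 7 \/ m = 8 \/ m = 9)%nat as [E|[E|[E|E]]] by lia; subst m; vm_compute; reflexivity.
Qed.

End Monotonicity.

Theorem part_c_increasing m : (6 <= m)%nat -> Phi1_over m < Phi1_over (S m).
Proof.
  intros Hm. unfold Phi1_over. pose proof (Phi1_ratio_increasing m Hm) as H.
  assert (Hpos : 0 < INR m) by (apply lt_0_INR; lia). pose proof (lt_0_INR (S m) ltac:(lia)).
  apply (Rmult_lt_reg_r (INR m * INR (S m))); [nra|].
  replace (IZR (Phi1 m) / INR m * (INR m * INR (S m))) with (INR (S m) * IZR (Phi1 m)) by (field; lra).
  replace (IZR (Phi1 (S m)) / INR (S m) * (INR m * INR (S m))) with (INR m * IZR (Phi1 (S m))) by (field; lra).
  rewrite !INR_IZR_INZ, <- !mult_IZR. apply IZR_lt. exact H.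
Qed.

(** Part (c), the limit.  [Phi1 n / lucas n -> 1] because the defect is at most
    [lucas (n/2+2) <= 4 lucas n / (n+1)], and [lucas (n+1) / lucas n] tends to
    the golden ratio; the ratio of [Phi1_over] is a product of such factors. *)

Lemma cv_rate (u : nat -> R) l C N :
  (forall n, (N <= n)%nat -> Rabs (u n - l) <= C / (INR n + 1)) -> Un_cv u l.
Proof.
  intros H eps Heps. destruct (INR_unbounded (Rabs C / eps)) as [N' HN'].
  exists (Nat.max N N'). intros n Hn. unfold Rdist.
  eapply Rle_lt_trans; [apply H; lia|].
  assert (HnN : INR N' <= INR n) by (apply le_INR; lia).
  assert (Hpos : 0 < INR n + 1) by (pose proof (pos_INR n); lra).
  apply (Rmult_lt_reg_r (INR n + 1)); auto. unfold Rdiv. rewrite Rmult_assoc, Rinv_l, Rmult_1_r by lra.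
  assert (Rabs C / eps * eps = Rabs C) by (field; lra).
  pose proof (Rle_abs C). nra.
Qed.

Lemma cv_eventually (u v : nat -> R) l N : (forall n, (N <= n)%nat -> u n = v n) -> Un_cv v l -> Un_cv u l.
Proof.
  intros H Hv eps Heps. destruct (Hv eps Heps) as [N' HN']. exists (Nat.max N N').
  intros n Hn. rewrite H by lia. apply HN'; lia.
Qed.

Lemma Rdiv_nonneg a b : 0 <= a -> 0 < b -> 0 <= a / b.
Proof. intros; unfold Rdiv; apply Rmult_le_pos; auto; left; apply Rinv_0_lt_compat; auto. Qed.

Definition golden : R := (1 + sqrt 5) / 2.

Lemma sqrt5_bounds : sqrt 5 * sqrt 5 = 5 /\ 2 < sqrt 5 < 3.
Proof.
  assert (H : sqrt 5 * sqrt 5 = 5) by (apply sqrt_sqrt; lra).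
  pose proof (sqrt_pos 5). split; auto. split; nra.
Qed.

Lemma golden_sq : golden * golden = golden + 1.
Proof. destruct sqrt5_bounds as [H _]. unfold golden. nra. Qed.

Definition lucasR (n : nat) : R := IZR (lucas n).
Definition Phi1R (n : nat) : R := IZR (Phi1 n).

Lemma lucasR_pos n : 1 <= lucasR n.
Proof. apply IZR_le, lucas_pos. Qed.

Lemma lucasR_ge_index n : INR n <= lucasR n.
Proof. unfold lucasR. rewrite INR_IZR_INZ. apply IZR_le, lucas_ge_index. Qed.

(* [lucas (n+1) - golden * lucas n] is multiplied by [1 - golden] at each step,
   and [|1 - golden| < 1]. *)
Lemma lucas_golden_error n : Rabs (lucasR (S n) - golden * lucasR n) <= 3.
Proof.
  destruct sqrt5_bounds as [H5 [H51 H52]].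
  assert (Hg : 1 < golden < 2) by (unfold golden; lra).
  induction n as [|n IH].
  - unfold lucasR. simpl lucas. unfold golden.
    replace (1 - (1 + sqrt 5) / 2 * 2) with (- sqrt 5) by field. rewrite Rabs_Ropp, Rabs_right; lra.
  - assert (E : lucasR (S (S n)) - golden * lucasR (S n) = (1 - golden) * (lucasR (S n) - golden * lucasR n)).
    { unfold lucasR. rewrite lucas_rec, plus_IZR.
      replace ((1 - golden) * (IZR (lucas (S n)) - golden * IZR (lucas n))) with
        (IZR (lucas (S n)) - golden * IZR (lucas (S n)) - golden * IZR (lucas n) + (golden * golden) * IZR (lucas n)) by ring.
      rewrite golden_sq. ring. }
    rewrite E, Rabs_mult, (Rabs_left (1 - golden)) by lra.
    pose proof (Rabs_pos (lucasR (S n) - golden * lucasR n)). nra.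
Qed.

Lemma lucas_ratio_cv : Un_cv (fun n => lucasR (S (S n)) / lucasR (S n)) golden.
Proof.
  apply (cv_rate _ _ 3 0). intros n _.
  pose proof (lucasR_ge_index (S n)) as H1. rewrite S_INR in H1. pose proof (lucasR_pos (S n)).
  pose proof (lucas_golden_error (S n)) as E.
  replace (lucasR (S (S n)) / lucasR (S n) - golden)
    with ((lucasR (S (S n)) - golden * lucasR (S n)) / lucasR (S n)) by (field; lra).
  unfold Rdiv. rewrite Rabs_mult, Rabs_inv, (Rabs_right (lucasR (S n))) by lra.
  apply Rmult_le_compat; auto using Rabs_pos.
  - left; apply Rinv_0_lt_compat; lra.
  - pose proof (pos_INR n). apply Rinv_le_contravar; lra.
Qed.

Lemma index_ratio_cv : Un_cv (fun n => INR (S n) / INR (S (S n))) 1.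
Proof.
  apply (cv_rate _ _ 1 0). intros n _. rewrite !S_INR. pose proof (pos_INR n).
  replace ((INR n + 1) / (INR n + 1 + 1) - 1) with (- (1 / (INR n + 1 + 1))) by (field; lra).
  rewrite Rabs_Ropp, Rabs_right by (apply Rle_ge; left; apply Rdiv_lt_0_compat; lra).
  unfold Rdiv. rewrite !Rmult_1_l. apply Rinv_le_contravar; lra.
Qed.

Lemma Phi1_lucas_close n : (7 <= n)%nat ->
  (INR n + 1) * (lucasR n - Phi1R n) <= 4 * lucasR n /\ Phi1R n <= lucasR n.
Proof.
  intros Hn. destruct (Phi1_le_lucas n ltac:(lia)) as [_ H1].
  pose proof (lucas_le_Phi1_plus n ltac:(lia)). pose proof (lucas_half n Hn).
  unfold lucasR, Phi1R. split; [|apply IZR_le; auto].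
  rewrite INR_IZR_INZ, <- minus_IZR, <- plus_IZR, <- !mult_IZR. apply IZR_le. nia.
Qed.

Lemma Phi1_lucas_cv : Un_cv (fun n => Phi1R (S (S n)) / lucasR (S (S n))) 1.
Proof.
  apply (cv_rate _ _ 4 5). intros n Hn.
  destruct (Phi1_lucas_close (S (S n)) ltac:(lia)) as [H1 H2].
  pose proof (lucasR_pos (S (S n))). rewrite !S_INR in H1. pose proof (pos_INR n).
  replace (Phi1R (S (S n)) / lucasR (S (S n)) - 1)
    with (- ((lucasR (S (S n)) - Phi1R (S (S n))) / lucasR (S (S n)))) by (field; lra).
  rewrite Rabs_Ropp, Rabs_right by (apply Rle_ge, Rdiv_nonneg; lra).
  apply (Rmult_le_reg_r (lucasR (S (S n)) * (INR n + 1))); [nra|].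
  replace ((lucasR (S (S n)) - Phi1R (S (S n))) / lucasR (S (S n)) * (lucasR (S (S n)) * (INR n + 1)))
    with ((lucasR (S (S n)) - Phi1R (S (S n))) * (INR n + 1)) by (field; lra).
  replace (4 / (INR n + 1) * (lucasR (S (S n)) * (INR n + 1))) with (4 * lucasR (S (S n))) by (field; lra).
  nra.
Qed.

Lemma Phi1R_half_lucas n : (6 <= n)%nat -> lucasR (S n) / 2 <= Phi1R (S n).
Proof.
  intros Hn. destruct (Phi1_lucas_close (S n) ltac:(lia)) as [H1 H2].
  pose proof (lucasR_pos (S n)). rewrite S_INR in H1.
  assert (Hn6 : 6 <= INR n) by (replace 6 with (INR 6) by (simpl; lra); apply le_INR; lia).
  nra.
Qed.

Lemma lucas_Phi1_cv : Un_cv (fun n => lucasR (S n) / Phi1R (S n)) 1.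
Proof.
  apply (cv_rate _ _ 8 6). intros n Hn.
  destruct (Phi1_lucas_close (S n) ltac:(lia)) as [H1 H2]. pose proof (Phi1R_half_lucas n Hn).
  pose proof (lucasR_pos (S n)). rewrite !S_INR in H1. pose proof (pos_INR n).
  replace (lucasR (S n) / Phi1R (S n) - 1) with ((lucasR (S n) - Phi1R (S n)) / Phi1R (S n)) by (field; lra).
  rewrite Rabs_right by (apply Rle_ge, Rdiv_nonneg; lra).
  apply (Rmult_le_reg_r (Phi1R (S n) * (INR n + 1))); [nra|].
  replace ((lucasR (S n) - Phi1R (S n)) / Phi1R (S n) * (Phi1R (S n) * (INR n + 1)))
    with ((lucasR (S n) - Phi1R (S n)) * (INR n + 1)) by (field; lra).
  replace (8 / (INR n + 1) * (Phi1R (S n) * (INR n + 1))) with (8 * Phi1R (S n)) by (field; lra).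
  nra.
Qed.

Theorem part_c_limit : Un_cv (fun n : nat => Phi1_over (S (S n)) / Phi1_over (S n)) ((1 + sqrt 5) / 2).
Proof.
  fold golden.
  pose proof (CV_mult _ _ _ _ (CV_mult _ _ _ _ (CV_mult _ _ _ _ Phi1_lucas_cv lucas_ratio_cv) lucas_Phi1_cv)
    index_ratio_cv) as H.
  replace (1 * golden * 1 * 1) with golden in H by ring.
  eapply (cv_eventually _ _ _ 6%nat); [|exact H].
  intros n Hn. cbv beta. pose proof (Phi1R_half_lucas n Hn).
  pose proof (lucasR_pos (S n)). pose proof (lucasR_pos (S (S n))). pose proof (pos_INR n).
  unfold Phi1_over. fold (Phi1R (S (S n))) (Phi1R (S n)). rewrite !S_INR.
  field. repeat split; lra.
Qed.

Theorem theorem1 :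
  (* (a) number of solutions of f^m(x) = x in [1,3] is the m-th Lucas number *)
  (forall m : nat, (1 <= m)%nat ->
     exists l : list R, NoDup l /\
       (forall x, In x l <-> (1 <= x <= 3 /\ iter m fmap x = x)) /\
       Z.of_nat (length l) = lucas m)
  /\
  (* (b) exactly Phi1(m)/m distinct periodic orbits of minimal period m *)
  (forall m : nat, (1 <= m)%nat ->
     exists reps : list R,
       (forall a, In a reps -> 1 <= a <= 3 /\ min_period fmap m a) /\
       (forall i j, (i < length reps)%nat -> (j < length reps)%nat -> i <> j ->
          ~ (forall y, in_orbit fmap (nth i reps 0) y <-> in_orbit fmap (nth j reps 0) y)) /\
       (forall x, 1 <= x <= 3 -> min_period fmap m x ->
          exists a, In a reps /\ (forall y, in_orbit fmap a y <-> in_orbit fmap x y)) /\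
       INR (length reps) = Phi1_over m)
  /\
  (* (c) strict monotonicity from m = 6 on, and ratio limit *)
  (forall m : nat, (6 <= m)%nat -> Phi1_over m < Phi1_over (S m))
  /\
  Un_cv (fun n : nat => Phi1_over (S (S n)) / Phi1_over (S n)) ((1 + sqrt 5) / 2).
Proof.
  split; [|split; [exact part_b|split; [exact part_c_increasing|exact part_c_limit]]].
  intros m Hm. exists (periodic_points m).
  split; [apply periodic_points_nodup; auto|].
  split; [intros x; apply periodic_points_spec; auto|apply periodic_points_count; auto].
Qed.
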